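(* Let $x,y$ be stable g-matchings with $x\prec_F y$. Then there exists a rotation $R\in\mathcal R(x)$ such that $x':=x+\chi^R$ satisfies $x'\preceq_F y$.
   Context: Let $G=(V,E)$ be a finite bipartite graph with color classes $W$ and $F$; the edge joining $w\in W$ and $f\in F$ is written $wf$. Let $b\in\mathbb Z_+^E$ be capacities. For $v\in V$, $E_v$ is the set of edges at $v$, $\mathcal B_v=\{z\in\mathbb Z_+^{E_v}: z\le b|_{E_v}\}$, $\mathbf 1^e$ the unit vector of $e$, $|z|=\sum_e|z(e)|$, $\wedge,\vee$ componentwise min/max. Each $v$ has a choice function $C_v:\mathcal B_v\to\mathcal B_v$ with $C_v(z)\le z$ and, for all $z,z'$: (A1) $z\ge z'\ge C_v(z)\Rightarrow C_v(z')=C_v(z)$; (A2) $z\ge z'\Rightarrow C_v(z)\wedge z'\le C_v(z')$; (A3) $z\ge z'\Rightarrow|C_v(z)|\ge|C_v(z')|$. $z$ is acceptable if $C_v(z)=z$; for distinct acceptable $z,z'$, $z'\prec_v z$ iff $C_v(z\vee z')=z$. $x_v$ = restriction of $x$ to $E_v$. A g-matching is $x\in\mathbb Z_+^E$, $x\le b$, each $x_v$ acceptable; $x\prec_F y$ (distinct) iff $x_f\preceq_f y_f$ for all $f\in F$. $e\in E_v$ is interesting for $v$ under acceptable $z$ if some $z'\in\mathcal B_v$ has $z'(e)>z(e)$, $z'(e')=z(e')$ for $e'\neq e$, $C_v(z')(e)>z(e)$; $e=wf$ blocks a g-matching $x$ if it is interesting for $w$ under $x_w$ and for $f$ under $x_f$;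 a g-matching is stable if no edge blocks it. Rotations: for stable $x$, $U_F^+(x)$ = edges $wf$ interesting for $f$ under $x_f$; $U_F^-(x)$ = edges $wf$ with $x(wf)>0$ not interesting for $f$. Legal $f$-pair: $(a,c)$, $a\in U_F^+(x)\cap E_f$, $c\in E_f\setminus\{a\}$, $C_f(x_f+\mathbf 1^a)=x_f+\mathbf 1^a-\mathbf 1^c$. Legal $w$-pair: $(c,a)$, $c\in U_F^-(x)\cap E_w$, $a\in U_F^+(x)\cap E_w$, $x_w+\mathbf 1^a-\mathbf 1^c$ acceptable; essential if no $d\in (U_F^+(x)\cap E_w)\setminus\{a\}$ is interesting for $w$ under $x_w+\mathbf 1^a-\mathbf 1^c$. Digraph $\mathcal D$: vertices $w^e,f^e$ for $e=wf\in U_F^+(x)\cup U_F^-(x)$, arcs $(w^a,f^a)$ for $a\in U_F^+(x)$, $(f^c,w^c)$ for $c\in U_F^-(x)$, $(f^a,f^c)$ for legal $f$-pairs $(a,c)$, $(w^c,w^a)$ for essential $w$-pairs $(c,a)$. Repeatedly delete vertices with no entering arc; each remaining directed cycle gives a cyclic sequence $(a_1,c_1,\dots,a_k,c_k)$ of distinct edges of $G$, a rotation $R\in\mathcal R(x)$ applicable to $x$, with $\chi^R$ equal to $1$ on $\{a_i\}$, $-1$ on $\{c_i\}$, $0$ elsewhere. *)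

From mathcomp Require Import all_boot.
Set Implicit Arguments. Unset Strict Implicit. Unset Printing Implicit Defensive.

(* Vectors in Z_+^{E_v} are represented as vectors
   in Z_+^E vanishing outside E_v (see inB).  C v is the choice function of v;
   only its behaviour on B_v matters. *)

Section GMatch.
Variables (W F E : finType) (ew : E -> W) (ef : E -> F) (b : E -> nat).
Variable C : W + F -> {ffun E -> nat} -> {ffun E -> nat}.

Local Notation vec := {ffun E -> nat}.

Definition inc (v : W + F) (e : E) : bool :=
  match v with inl w => ew e == w | inr f => ef e == f end.

Definition inB (v : W + F) (z : vec) : Prop :=
  forall e, z e <= b e /\ (~~ inc v e -> z e = 0).

Definition vle (z z' : vec) : Prop := forall e, z e <= z' e.
Definition vmin (z z' : vec) : vec := [ffun e => minn (z e) (z' e)].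
Definition vmax (z z' : vec) : vec := [ffun e => maxn (z e) (z' e)].
Definition vnorm (z : vec) : nat := \sum_(e : E) z e.
Definition unitv (a : E) : vec := [ffun e => nat_of_bool (e == a)].
Definition vadd (z z' : vec) : vec := [ffun e => z e + z' e].
Definition vsub (z z' : vec) : vec := [ffun e => z e - z' e].

Definition choice_function (v : W + F) : Prop :=
  [/\ forall z, inB v z -> inB v (C v z) /\ vle (C v z) z,
      forall z z', inB v z -> inB v z' -> vle z' z -> vle (C v z) z' ->
        C v z' = C v z,
      forall z z', inB v z -> inB v z' -> vle z' z ->
        vle (vmin (C v z) z') (C v z')
    & forall z z', inB v z -> inB v z' -> vle z' z ->
        vnorm (C v z') <= vnorm (C v z)].

Definition restr (v : W + F) (x : vec) : vec :=
  [ffun e => if inc v e then x e else 0].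

Definition acceptable (v : W + F) (z : vec) : Prop := inB v z /\ C v z = z.

Definition prec (v : W + F) (z' z : vec) : Prop :=
  [/\ acceptable v z, acceptable v z', z' <> z & C v (vmax z z') = z].
Definition preceq (v : W + F) (z' z : vec) : Prop := z' = z \/ prec v z' z.

Definition gmatching (x : vec) : Prop :=
  (forall e, x e <= b e) /\ forall v, acceptable v (restr v x).

Definition precF (x y : vec) : Prop :=
  x <> y /\ forall f : F, preceq (inr f) (restr (inr f) x) (restr (inr f) y).
Definition preceqF (x y : vec) : Prop := x = y \/ precF x y.

Definition interesting (v : W + F) (e : E) (z : vec) : Prop :=
  inc v e /\
  exists z' : vec, [/\ inB v z', z e < z' e,
                      (forall e', e' <> e -> z' e' = z e') & z e < C v z' e].

Definition blocks (x : vec) (e : E) : Prop :=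
  interesting (inl (ew e)) e (restr (inl (ew e)) x) /\
  interesting (inr (ef e)) e (restr (inr (ef e)) x).

Definition stable (x : vec) : Prop := gmatching x /\ forall e, ~ blocks x e.

Definition Uplus (x : vec) (e : E) : Prop :=
  interesting (inr (ef e)) e (restr (inr (ef e)) x).
Definition Uminus (x : vec) (e : E) : Prop := 0 < x e /\ ~ Uplus x e.

Definition legalF (x : vec) (a c : E) : Prop :=
  [/\ Uplus x a, ef c = ef a, c <> a &
      (* C_f(x_f + 1^a) = x_f + 1^a - 1^c, written without subtraction *)
      vadd (C (inr (ef a)) (vadd (restr (inr (ef a)) x) (unitv a))) (unitv c)
      = vadd (restr (inr (ef a)) x) (unitv a)].

(* x_w + 1^a - 1^c, w = ew c (exact, since x(c) > 0 for c in U^-) *)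
Definition wswap (x : vec) (c a : E) : vec :=
  vsub (vadd (restr (inl (ew c)) x) (unitv a)) (unitv c).

Definition legalW (x : vec) (c a : E) : Prop :=
  [/\ Uminus x c, Uplus x a, ew a = ew c & acceptable (inl (ew c)) (wswap x c a)].

Definition essentialW (x : vec) (c a : E) : Prop :=
  legalW x c a /\
  forall d, Uplus x d -> ew d = ew c -> d <> a ->
    ~ interesting (inl (ew c)) d (wswap x c a).

(* Digraph D: vertex (true, e) is w^e, vertex (false, e) is f^e. *)
Definition Dvert (x : vec) (u : bool * E) : Prop := Uplus x u.2 \/ Uminus x u.2.

Definition Darc (x : vec) (u u' : bool * E) : Prop :=
  [/\ Dvert x u, Dvert x u' &
    [\/ [/\ u.1 = true, u'.1 = false, u.2 = u'.2 & Uplus x u.2],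
        [/\ u.1 = false, u'.1 = true, u.2 = u'.2 & Uminus x u.2],
        [/\ u.1 = false, u'.1 = false & legalF x u.2 u'.2]
      | [/\ u.1 = true, u'.1 = true & essentialW x u.2 u'.2]]].

Fixpoint alive (x : vec) (n : nat) (u : bool * E) : Prop :=
  match n with
  | 0 => Dvert x u
  | n'.+1 => alive x n' u /\ exists u', alive x n' u' /\ Darc x u' u
  end.

Definition remaining (x : vec) (u : bool * E) : Prop := forall n, alive x n u.

Definition Rarc (x : vec) (u u' : bool * E) : Prop :=
  [/\ remaining x u, remaining x u' & Darc x u u'].

(* A rotation R in R(x): cyclic sequence s = [(a_1,c_1); ...; (a_k,c_k)],
   k >= 1, of distinct edges a_1,c_1,...,a_k,c_k, such that
   w^{a_i} -> f^{a_i} -> f^{c_i} -> w^{c_i} -> w^{a_{i+1}} (indices mod k)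
   is a directed cycle of the remaining digraph. *)
Definition rotation (x : vec) (s : seq (E * E)) : Prop :=
  [/\ 0 < size s, uniq (map fst s ++ map snd s) &
      forall a c a' c', ((a, c), (a', c')) \in zip s (rot 1 s) ->
        [/\ Rarc x (true, a) (false, a), Rarc x (false, a) (false, c),
            Rarc x (false, c) (true, c) & Rarc x (true, c) (true, a')]].

(* x + chi^R (the c_i lie in U^-, so x(c_i) > 0 and no truncation occurs) *)
Definition apply_rotation (s : seq (E * E)) (x : vec) : vec :=
  [ffun e => if e \in map fst s then x e + 1
             else if e \in map snd s then x e - 1 else x e].

End GMatch.

From Pilot Require Import Defs.
From mathcomp Require Import all_boot zify boolp.
Set Implicit Arguments. Unset Strict Implicit. Unset Printing Implicit Defensive.

(** Firms weakly prefer [y] and workers weakly prefer [x], so size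
    monotonicity (A3) gives [|x_f| <= |y_f|] and [|y_w| <= |x_w|]; counting
    edges from both sides forces equality at every vertex. Call [c]
    decreasing when [c] is in U^-(x) and [y c < x c]. Two steps alternate: the
    firm of an edge [a] in U^+(x) with [x a < y a], or with [a] interesting for
    its worker under [y], rejects one unit of a decreasing edge [c] when offered
    [a] (a legal f-pair); the worker of a decreasing [c] swaps it for an edge [a]
    of that kind (an essential w-pair). Iterating on the finite edge set closes
    a cycle; each of its vertices has an entering arc inside the cycle, so it
    survives the deletions and is a rotation. After the rotation every firm
    gains and loses equally many units and still prefers [y], because every
    added edge either has [x a < y a] or cannot block [y]. *)

Lemma eq_of_leq_sum (I : finType) (u u' : I -> nat) :
  (forall i, u i <= u' i) -> \sum_i u' i <= \sum_i u i -> forall i, u i = u' i.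
Proof.
move=> le_uu' le_sum i; apply/eqP; rewrite eqn_leq le_uu' /= -subn_eq0.
have : \sum_i (u' i - u i) == 0 by rewrite sumnB ?subn_eq0 // => j _; apply: le_uu'.
by rewrite sum_nat_eq0 => /forallP /(_ i).
Qed.

Lemma sum_mem_count (T : finType) (s : seq T) (P : pred T) :
  uniq s -> \sum_(t : T) ((t \in s) && P t) = count P s.
Proof.
move=> uniq_s; rewrite -sum1_count [RHS]big_mkcond (big_uniq _ uniq_s) /= [RHS]big_mkcond.
by apply: eq_bigr => t _; case: (t \in s); case: (P t).
Qed.

Lemma uniq_map_inj_in (T T' : eqType) (f : T -> T') (s : seq T) :
  uniq (map f s) -> {in s &, injective f}.
Proof.
elim: s => [//|t s IHs] /= /andP [ft_notin uniq_fs] t1 t2.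
rewrite !in_cons => /predU1P [->|t1s] /predU1P [->|t2s] // eq_f.
- by move: ft_notin; rewrite eq_f map_f.
- by move: ft_notin; rewrite -eq_f map_f.
- exact: IHs.
Qed.

Lemma map_traject (T : Type) (f : T -> T) t n :
  map f (traject f t n) = traject f (f t) n.
Proof. by elim: n t => //= n IHn t; rewrite IHn. Qed.

Lemma exists_fcycle (T : finType) (f : T -> T) (P : T -> Prop) t :
  P t -> (forall u, P u -> P (f u)) ->
  exists cs : seq T,
    [/\ 0 < size cs, uniq cs, rot 1 cs = map f cs & forall u, u \in cs -> P u].
Proof.
move=> Pt Pf; have P_iter n : P (iter n f t) by elim: n => //= n /Pf.
have /trajectP [i lt_i_order iter_order] := looping_order f t.
set d := iter i f t.
have d_cycle : iter (order f d) f d = d.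
  apply/(orbitPcycle 3 4); exists (order f t - i).-1.
  by rewrite prednK ?subn_gt0 // /d -iterD subnK; [exact: iter_order | exact: ltnW].
exists (orbit f d); split.
- by rewrite size_orbit order_gt0.
- exact: orbit_uniq.
- by rewrite /orbit -orderSpred map_traject trajectS rot1_cons trajectSr -iterSr orderSpred d_cycle.
- by move=> u /trajectP [k _ ->]; rewrite /d -iterD.
Qed.

Section Vectors.
Variable E : finType.
Local Notation vec := {ffun E -> nat}.
Implicit Types (z lo : vec) (a : E).

Lemma leq_vnorm z z' : vle z z' -> vnorm z <= vnorm z'.
Proof. by move=> le_zz'; apply: leq_sum => e _; apply: le_zz'. Qed.

Lemma vle_vnorm_eq z z' : vle z z' -> vnorm z' <= vnorm z -> z = z'.
Proof. by move=> le_zz' le_norm; apply/ffunP; apply: eq_of_leq_sum. Qed.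

Lemma vnorm_vadd z z' : vnorm (vadd z z') = vnorm z + vnorm z'.
Proof. by rewrite /vnorm -big_split; apply: eq_bigr => e _; rewrite ffunE. Qed.

Lemma vnorm_unitv a : vnorm (unitv a) = 1.
Proof.
rewrite /vnorm (bigD1 a) //= big1 => [|e /negbTE ne]; by rewrite ffunE ?eqxx ?ne.
Qed.

Lemma vnorm_vadd_unitv z a : vnorm (vadd z (unitv a)) = (vnorm z).+1.
Proof. by rewrite vnorm_vadd vnorm_unitv addn1. Qed.

Lemma exists_vadd_unitv lo z :
  vle lo z -> vnorm z = (vnorm lo).+1 -> exists a, z = vadd lo (unitv a).
Proof.
move=> le_lo norm_z.
have /existsP [a lt_a] : [exists a, lo a < z a].
  apply: contraT; rewrite negb_exists => /forallP ge_lo.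
  have /leq_vnorm : vle z lo by move=> e; rewrite leqNgt ge_lo.
  by rewrite norm_z ltnn.
exists a; apply/esym/vle_vnorm_eq; last by rewrite vnorm_vadd_unitv norm_z.
by move=> e; rewrite !ffunE; case: eqP => [->|_]; rewrite ?addn1 ?addn0 ?le_lo.
Qed.

End Vectors.

Section ChoiceFunctions.
Variables (W F E : finType) (ew : E -> W) (ef : E -> F) (b : E -> nat).
Variable C : W + F -> {ffun E -> nat} -> {ffun E -> nat}.
Local Notation vec := {ffun E -> nat}.
Local Notation inB := (inB ew ef b).
Local Notation inc := (inc ew ef).
Local Notation restr := (restr ew ef).
Local Notation interesting := (interesting ew ef b C).
Local Notation acceptable := (acceptable ew ef b C).
Implicit Types (v : W + F) (z u : vec) (a c e : E).

Lemma inB_vle v z z' : inB v z' -> vle z z' -> inB v z.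
Proof.
move=> Bz' le_zz' e; have [le_b out0] := Bz' e; split; first exact: leq_trans (le_zz' e) le_b.
by move=> /out0 z'e0; have := le_zz' e; rewrite z'e0 leqn0 => /eqP.
Qed.

Lemma inB_vmax v z z' : inB v z -> inB v z' -> inB v (vmax z z').
Proof.
move=> Bz Bz' e; have [le_b out0] := Bz e; have [le_b' out0'] := Bz' e.
by rewrite ffunE geq_max le_b le_b'; split => // /[dup] /out0 -> /out0' ->.
Qed.

Lemma restrE v z e : restr v z e = if inc v e then z e else 0.
Proof. by rewrite ffunE. Qed.

Lemma sum_vnorm_restr z :
  \sum_w vnorm (restr (inl w) z) = vnorm z /\ \sum_f vnorm (restr (inr f) z) = vnorm z.
Proof.
split; rewrite /vnorm exchange_big /=; apply: eq_bigr => e _.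
  rewrite (bigD1 (ew e)) //= ffunE /= eqxx big1 ?addn0 // => w /negbTE ne.
  by rewrite ffunE /= eq_sym ne.
rewrite (bigD1 (ef e)) //= ffunE /= eqxx big1 ?addn0 // => f /negbTE ne.
by rewrite ffunE /= eq_sym ne.
Qed.

Variable v : W + F.
Hypothesis HCv : choice_function ew ef b C v.

Lemma choice_inB z : inB v z -> inB v (C v z).
Proof. by case: HCv => H _ _ _ /H []. Qed.

Lemma choice_vle z : inB v z -> vle (C v z) z.
Proof. by case: HCv => H _ _ _ /H []. Qed.

Lemma choice_consistent z z' :
  inB v z -> vle z' z -> vle (C v z) z' -> C v z' = C v z.
Proof. by case: HCv => _ H _ _ Bz le_z'; apply: H => //; apply: inB_vle Bz le_z'. Qed.

Lemma choice_substitutable z z' e :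
  inB v z -> vle z' z -> minn (C v z e) (z' e) <= C v z' e.
Proof.
case: HCv => _ _ H _ Bz le_z'.
by have := H z z' Bz (inB_vle Bz le_z') le_z' e; rewrite ffunE.
Qed.

Lemma choice_size_monotone z z' :
  inB v z -> vle z' z -> vnorm (C v z') <= vnorm (C v z).
Proof. by case: HCv => _ _ _ H Bz le_z'; apply: H => //; apply: inB_vle Bz le_z'. Qed.

Lemma choice_acceptable z : inB v z -> acceptable v (C v z).
Proof.
move=> Bz; split; first exact: choice_inB.
by apply: choice_consistent => //; apply: choice_vle.
Qed.

Lemma interesting_vadd_unitv z e :
  interesting v e z -> inB v (vadd z (unitv e)) /\ z e < C v (vadd z (unitv e)) e.
Proof.
move=> [_ [z' [Bz' lt_e eq_z' lt_C]]].
have le_z' : vle (vadd z (unitv e)) z'.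
  by move=> e'; rewrite !ffunE; case: eqP => [->|/eq_z' ->]; rewrite ?addn1 ?addn0.
split; first exact: inB_vle Bz' le_z'.
by have := choice_substitutable e Bz' le_z'; rewrite !ffunE eqxx; lia.
Qed.

Lemma interesting_of_choice z u e : inc v e -> inB v u ->
  vle (vadd z (unitv e)) u -> z e < C v u e -> interesting v e z.
Proof.
move=> inc_e Bu le_u lt_C; split => //; exists (vadd z (unitv e)); split.
- exact: inB_vle Bu le_u.
- by rewrite !ffunE eqxx addn1.
- by move=> e' /eqP /negbTE ne; rewrite !ffunE ne addn0.
- by have := choice_substitutable e Bu le_u; rewrite !ffunE eqxx; lia.
Qed.

Lemma choice_le_of_not_interesting z u e : inB v u ->
  vle (vadd z (unitv e)) u -> ~ interesting v e z -> C v u e <= z e.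
Proof.
move=> Bu le_u not_int; have [inc_e|out_e] := boolP (inc v e).
  by rewrite leqNgt; apply/negP => /(interesting_of_choice inc_e Bu le_u).
have [_ /(_ out_e) u0] := Bu e; have := choice_vle Bu e; rewrite u0; lia.
Qed.

Lemma choice_eq_of_not_interesting z u : acceptable v z -> inB v u -> vle z u ->
  (forall e, z e < u e -> ~ interesting v e z) -> C v u = z.
Proof.
move=> [_ Cz] Bu le_zu not_int; rewrite -Cz; apply/esym/(choice_consistent Bu le_zu).
move=> e; have [le_uz|lt_zu] := leqP (u e) (z e); first exact: leq_trans (choice_vle Bu e) _.
have le_u : vle (vadd z (unitv e)) u.
  by move=> e'; rewrite !ffunE; case: (e' =P e) => [->|_]; rewrite ?addn1 ?addn0 ?le_zu.
exact: choice_le_of_not_interesting Bu le_u (not_int e lt_zu).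
Qed.

Lemma choice_vadd_unitv_cases z a : acceptable v z -> inB v (vadd z (unitv a)) ->
  z a < C v (vadd z (unitv a)) a ->
  C v (vadd z (unitv a)) = vadd z (unitv a) \/
  exists2 c, c <> a & vadd (C v (vadd z (unitv a))) (unitv c) = vadd z (unitv a).
Proof.
move=> [_ Cz] Ba lt_a; set R := C v (vadd z (unitv a)).
have le_R := choice_vle Ba.
have [lt_R|eq_R] := ltnP (vnorm R) (vnorm (vadd z (unitv a))); last first.
  by left; apply: vle_vnorm_eq.
right; have ge_R : vnorm z <= vnorm R.
  by rewrite -{1}Cz; apply: choice_size_monotone Ba _ => e; rewrite ffunE leq_addr.
have [c Rc] : exists c, vadd z (unitv a) = vadd R (unitv c).
  by apply: exists_vadd_unitv => //; move: lt_R; rewrite !vnorm_vadd_unitv; lia.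
exists c => [ca|]; last by rewrite -Rc.
by move/ffunP/(_ a): Rc lt_a; rewrite !ffunE ca eqxx -/R; lia.
Qed.

Lemma rejected_not_interesting z a c : acceptable v z -> inB v (vadd z (unitv a)) ->
  c <> a -> vadd (C v (vadd z (unitv a))) (unitv c) = vadd z (unitv a) ->
  ~ interesting v c z.
Proof.
move=> [_ Cz] Ba ca Rc int_c; have [Bc lt_c] := interesting_vadd_unitv int_c.
set R := C v (vadd z (unitv a)) in Rc.
(* Otherwise [v] would accept all of [z + 1^c] out of [z + 1^a + 1^c], whose
   choice is [R], of size only [|z|]. *)
have RE e : R e + (e == c) = z e + (e == a) by move/ffunP/(_ e): Rc; rewrite !ffunE.
have [ca' ac'] : (c == a) = false /\ (a == c) = false by split; apply/eqP => // /esym.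
set Z := vadd (vadd z (unitv a)) (unitv c).
have le_Za : vle (vadd z (unitv a)) Z by move=> e; rewrite [Z e]ffunE leq_addr.
have le_Zc : vle (vadd z (unitv c)) Z.
  by move=> e; rewrite !ffunE -addnA leq_add2l leq_addl.
have BZ : inB v Z.
  apply: inB_vle (inB_vmax Ba Bc) _ => e; rewrite !ffunE.
  by case: (e =P a) => [->|_]; rewrite ?ac' /= ?addn0 ?leq_maxl ?leq_maxr.
have CZ_R : C v Z = R.
  apply: vle_vnorm_eq; last exact: choice_size_monotone BZ le_Za.
  move=> e; case: (e =P c) => [->|/eqP ne].
    by have := choice_substitutable c BZ le_Za; have := RE c; rewrite !ffunE eqxx ca' /= -/R; lia.
  by have := choice_vle BZ e; have := RE e; rewrite !ffunE (negbTE ne); lia.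
have Cc : C v (vadd z (unitv c)) = vadd z (unitv c).
  apply/ffunP => e; apply/eqP; rewrite eqn_leq choice_vle //=.
  case: (e =P c) => [->|/eqP ne]; first by move: lt_c; rewrite !ffunE eqxx addn1.
  have := choice_substitutable e BZ le_Zc; rewrite CZ_R.
  by have := RE e; rewrite !ffunE (negbTE ne); lia.
have := choice_size_monotone BZ le_Zc; rewrite CZ_R Cc vnorm_vadd_unitv.
by have := congr1 (@vnorm E) Rc; rewrite !vnorm_vadd_unitv; lia.
Qed.

End ChoiceFunctions.

Section StableMatchings.
Variables (W F E : finType) (ew : E -> W) (ef : E -> F) (b : E -> nat).
Variable C : W + F -> {ffun E -> nat} -> {ffun E -> nat}.
Local Notation vec := {ffun E -> nat}.
Local Notation inB := (inB ew ef b).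
Local Notation inc := (inc ew ef).
Local Notation restr := (restr ew ef).
Local Notation interesting := (interesting ew ef b C).
Local Notation acceptable := (acceptable ew ef b C).
Local Notation stable := (stable ew ef b C).
Local Notation Uplus := (Uplus ew ef b C).
Local Notation Uminus := (Uminus ew ef b C).
Hypothesis HC : forall v, choice_function ew ef b C v.
Implicit Types (v : W + F) (z u : vec) (a c e : E).

Lemma stable_le_b z e : stable z -> z e <= b e.
Proof. by case=> [[]]. Qed.

Lemma stable_acceptable z v : stable z -> acceptable v (restr v z).
Proof. by case=> [[_ acc_z] _]. Qed.

Lemma stable_inB z v : stable z -> inB v (restr v z).
Proof. by case/(stable_acceptable v). Qed.

Lemma stable_choice z v : stable z -> C v (restr v z) = restr v z.
Proof. by case/(stable_acceptable v). Qed.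

Lemma stable_no_block z e : stable z ->
  interesting (inl (ew e)) e (restr (inl (ew e)) z) -> ~ Uplus z e.
Proof. by move=> [_ no_block] int_w int_f; apply: (no_block e). Qed.

Lemma Uplus_inB z e : Uplus z e -> inB (inr (ef e)) (vadd (restr (inr (ef e)) z) (unitv e)).
Proof. by case/(interesting_vadd_unitv (HC _)). Qed.

Lemma Uplus_lt_b z e : Uplus z e -> z e < b e.
Proof. by move/Uplus_inB => /(_ e) [+ _]; rewrite !ffunE /= !eqxx addn1. Qed.

Section StablePair.
Variables x y : vec.
Hypotheses (Hx : stable x) (Hy : stable y) (Hxy : precF ew ef b C x y).

Lemma firm_choice_vmax f :
  C (inr f) (vmax (restr (inr f) y) (restr (inr f) x)) = restr (inr f) y.
Proof.
case: Hxy => _ /(_ f) [<-|[] //].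
have -> : vmax (restr (inr f) x) (restr (inr f) x) = restr (inr f) x.
  by apply/ffunP => e; rewrite ffunE maxnn.
exact: stable_choice.
Qed.

Lemma Uplus_of_lt e : x e < y e -> Uplus x e.
Proof.
move=> lt_xy; have Bu := inB_vmax (stable_inB (inr (ef e)) Hy) (stable_inB (inr (ef e)) Hx).
apply: (interesting_of_choice (HC _) _ Bu); first by rewrite /= eqxx.
  by move=> e'; rewrite !ffunE; case: (e' =P e) => [->|_]; rewrite /= ?eqxx; lia.
by rewrite firm_choice_vmax !ffunE /= eqxx.
Qed.

Definition worker_bound w : vec :=
  [ffun e => if inc (inl w) e then maxn (y e) (x e + `[< Uplus x e >]) else 0].

Lemma inB_worker_bound w : inB (inl w) (worker_bound w).
Proof.
move=> e; rewrite ffunE; case: ifP => [_|/negbT //]; split => //.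
rewrite geq_max (stable_le_b e Hy) /=.
by case: asboolP => [/Uplus_lt_b|_]; rewrite ?addn1 ?addn0 ?(stable_le_b e Hx).
Qed.

Lemma worker_bound_ge w : vle (restr (inl w) x) (worker_bound w).
Proof. by move=> e; rewrite !ffunE; case: ifP => // _; rewrite leq_max leq_addr orbT. Qed.

Lemma worker_bound_gt w e :
  restr (inl w) x e < worker_bound w e -> ew e = w /\ Uplus x e.
Proof.
rewrite !ffunE; case: ifP => [/eqP -> | _]; last by rewrite ltnn.
by case: asboolP => // not_U; rewrite addn0 leq_max ltnn orbF => /Uplus_of_lt.
Qed.

Lemma choice_worker_bound w : C (inl w) (worker_bound w) = restr (inl w) x.
Proof.
apply: (choice_eq_of_not_interesting (HC _) (stable_acceptable _ Hx) (inB_worker_bound w)).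
  exact: worker_bound_ge.
move=> e /worker_bound_gt [<- U_e] int_e.
exact: stable_no_block Hx int_e U_e.
Qed.

Lemma worker_choice_vmax w :
  C (inl w) (vmax (restr (inl w) x) (restr (inl w) y)) = restr (inl w) x.
Proof.
rewrite -[RHS](choice_worker_bound w); apply: (choice_consistent (HC _) (inB_worker_bound w)).
  move=> e; rewrite !ffunE; case: ifP => // _.
  by rewrite geq_max leq_maxl leq_max leq_addr orbT.
by move=> e; rewrite choice_worker_bound [vmax _ _ e]ffunE leq_maxl.
Qed.

Lemma vnorm_restr_eq v : vnorm (restr v x) = vnorm (restr v y).
Proof.
have le_w w : vnorm (restr (inl w) y) <= vnorm (restr (inl w) x).
  rewrite -(worker_choice_vmax w) -{1}(stable_choice (inl w) Hy).
  apply: (choice_size_monotone (HC _) (inB_vmax (stable_inB _ Hx) (stable_inB _ Hy))).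
  by move=> e; rewrite [vmax _ _ e]ffunE leq_maxr.
have le_f f : vnorm (restr (inr f) x) <= vnorm (restr (inr f) y).
  rewrite -(firm_choice_vmax f) -{1}(stable_choice (inr f) Hx).
  apply: (choice_size_monotone (HC _) (inB_vmax (stable_inB _ Hy) (stable_inB _ Hx))).
  by move=> e; rewrite [vmax _ _ e]ffunE leq_maxr.
have [sum_xw sum_xf] := sum_vnorm_restr ew ef x.
have [sum_yw sum_yf] := sum_vnorm_restr ew ef y.
case: v => [w|f]; [apply/esym; apply: eq_of_leq_sum le_w _ w | apply: eq_of_leq_sum le_f _ f].
  by rewrite sum_xw sum_yw -sum_xf -sum_yf; apply: leq_sum => f _.
by rewrite sum_xf sum_yf -sum_xw -sum_yw; apply: leq_sum => w _.
Qed.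

Section WorkerStep.
Variable c : E.
Hypotheses (Um_c : Uminus x c) (lt_yx_c : y c < x c).
Local Notation w := (ew c).
Local Notation X := (restr (inl (ew c)) x).
Local Notation Yw := (restr (inl (ew c)) y).
Local Notation cut := (vsub (worker_bound (ew c)) (unitv c)).

(* From [cut] the worker keeps [x_w - 1^c] and, since [|x_w| = |y_w|], exactly
   one more unit: the edge [a] of the essential pair [(c, a)]. *)

Lemma vle_worker_cut : vle cut (worker_bound w).
Proof. by move=> e; rewrite ffunE leq_subr. Qed.

Lemma inB_worker_cut : inB (inl w) cut.
Proof. exact: inB_vle (inB_worker_bound w) vle_worker_cut. Qed.

Lemma worker_bound_Uminus : worker_bound w c = x c.
Proof.
have [_ not_U] := Um_c.
by rewrite ffunE /= eqxx asboolF // addn0; apply/maxn_idPr/ltnW.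
Qed.

Lemma vle_restr_y_worker_cut : vle Yw cut.
Proof.
move=> e; rewrite [cut e]ffunE [unitv c e]ffunE.
case: (e =P c) => [->|_] /=; first by rewrite worker_bound_Uminus ffunE /= eqxx; lia.
by rewrite subn0 !ffunE; case: ifP => // _; rewrite leq_maxl.
Qed.

Lemma choice_worker_cut_ge : vle (vsub X (unitv c)) (C (inl w) cut).
Proof.
move=> e; have := choice_substitutable (HC _) e (inB_worker_bound w) vle_worker_cut.
rewrite choice_worker_bound; have := worker_bound_ge w e.
by rewrite [cut e]ffunE [vsub _ _ e]ffunE; lia.
Qed.

Lemma vnorm_choice_worker_cut : vnorm (C (inl w) cut) = vnorm X.
Proof.
apply/eqP; rewrite eqn_leq; apply/andP; split.
  rewrite -(choice_worker_bound w).
  exact: (choice_size_monotone (HC _) (inB_worker_bound w) vle_worker_cut).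
rewrite vnorm_restr_eq -{1}(stable_choice (inl w) Hy).
exact: (choice_size_monotone (HC _) inB_worker_cut vle_restr_y_worker_cut).
Qed.

Lemma choice_worker_cut_wswap : exists2 a, a <> c & C (inl w) cut = wswap ew ef x c a.
Proof.
have x_c : 0 < x c by case: Um_c.
set lo := vsub X (unitv c).
have lo_c : vadd lo (unitv c) = X.
  apply/ffunP => e; rewrite !ffunE.
  by case: (e =P c) => [->|_]; rewrite /= ?eqxx ?subn0 ?addn0 // subnK.
have [a Ccut] : exists a, C (inl w) cut = vadd lo (unitv a).
  apply: (exists_vadd_unitv choice_worker_cut_ge).
  by rewrite vnorm_choice_worker_cut -{1}lo_c vnorm_vadd_unitv.
have ac : a <> c.
  move=> ac; have := choice_vle (HC _) inB_worker_cut c.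
  by rewrite Ccut ac lo_c [cut c]ffunE worker_bound_Uminus !ffunE /= !eqxx; lia.
have ca' : (c == a) = false by apply/eqP => /esym.
exists a => //; rewrite Ccut; apply/ffunP => e; rewrite !ffunE.
by case: (e =P c) => [->|_]; rewrite /= ?ca' ?eqxx ?addn0 ?subn0.
Qed.

Lemma worker_step : exists a, essentialW ew ef b C x c a /\
  (y a <= x a -> interesting (inl (ew a)) a (restr (inl (ew a)) y)).
Proof.
have [a ac Ccut] := choice_worker_cut_wswap.
have ac' : (a == c) = false by apply/eqP.
have Ccut_a : C (inl w) cut a = X a + 1 by rewrite Ccut !ffunE eqxx ac' subn0.
have cut_a : cut a = worker_bound w a by rewrite !ffunE ac' subn0.
have [wa U_a] : ew a = w /\ Uplus x a.
  by apply: worker_bound_gt; have := choice_vle (HC _) inB_worker_cut a; rewrite Ccut_a cut_a addn1.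
have bound_a : worker_bound w a = maxn (y a) (x a + 1) by rewrite ffunE /= wa eqxx asboolT.
exists a; split; first split.
- by split => //; rewrite -Ccut; apply: (choice_acceptable (HC _) inB_worker_cut).
- move=> d U_d wd da; rewrite -Ccut => /(interesting_vadd_unitv (HC _)) [_].
  have dc : d <> c by move=> dc; apply: Um_c.2; rewrite -dc.
  suff -> : C (inl w) (vadd (C (inl w) cut) (unitv d)) = C (inl w) cut by rewrite ltnn.
  apply: (choice_consistent (HC _) inB_worker_cut) => e; last by rewrite ffunE leq_addr.
  rewrite ffunE [unitv d e]ffunE; case: (e =P d) => [->|_]; last first.
    by rewrite addn0 (choice_vle (HC _) inB_worker_cut).
  by rewrite Ccut !ffunE /= (introF eqP da) (introF eqP dc) wd eqxx asboolT //=; lia.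
- move=> le_yx_a; rewrite wa.
  apply: (interesting_of_choice (HC _) _ inB_worker_cut); first by rewrite /= wa.
    move=> e; rewrite [vadd _ _ e]ffunE [unitv a e]ffunE.
    case: (e =P a) => [->|_]; last by rewrite addn0 vle_restr_y_worker_cut.
    by rewrite cut_a bound_a ffunE /= wa eqxx; lia.
  by rewrite Ccut_a !ffunE /= wa eqxx; lia.
Qed.

End WorkerStep.

Section FirmStep.
Variable a : E.
Hypotheses (U_a : Uplus x a)
  (gain_a : x a < y a \/ interesting (inl (ew a)) a (restr (inl (ew a)) y)).
Local Notation f := (ef a).
Local Notation Yf := (restr (inr (ef a)) y).
Local Notation Xa := (vadd (restr (inr (ef a)) x) (unitv a)).
Local Notation bound := (vmax Yf Xa).

(* The firm still chooses [y_f] from [bound], so by size it cannot keep all of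
   [Xa]: it rejects a unit of some [c], and [y c < x c]. *)

Lemma inB_firm_bound : inB (inr f) bound.
Proof. exact: inB_vmax (stable_inB _ Hy) (Uplus_inB U_a). Qed.

Lemma vle_firm_bound : vle Xa bound.
Proof. by move=> e; rewrite [bound e]ffunE leq_maxr. Qed.

Lemma choice_firm_bound : C (inr f) bound = Yf.
Proof.
rewrite -[RHS](firm_choice_vmax f); apply/esym/(choice_consistent (HC _) inB_firm_bound) => e.
  by rewrite !ffunE; lia.
case: (e =P a) => [->|/eqP ne]; last first.
  by have := choice_vle (HC _) inB_firm_bound e; rewrite !ffunE (negbTE ne) addn0.
have [lt_xy|le_yx] := ltnP (x a) (y a).
  by have := choice_vle (HC _) inB_firm_bound a; rewrite !ffunE /= eqxx; lia.
have int_a : interesting (inl (ew a)) a (restr (inl (ew a)) y).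
  by case: gain_a => // lt_xy; move: le_yx; rewrite leqNgt lt_xy.
have le_bound : vle (vadd Yf (unitv a)) bound.
  move=> e'; rewrite !ffunE; case: (e' =P a) => [->|_]; rewrite /= ?eqxx; lia.
have := choice_le_of_not_interesting (HC _) inB_firm_bound le_bound (stable_no_block Hy int_a).
by rewrite [vmax _ _ a]ffunE; lia.
Qed.

Lemma firm_step : exists c, [/\ legalF ew ef b C x a c, Uminus x c & y c < x c].
Proof.
have [_ lt_a] := interesting_vadd_unitv (HC _) U_a.
have [C_Xa|[c ca Rc]] :=
  choice_vadd_unitv_cases (HC _) (stable_acceptable _ Hx) (Uplus_inB U_a) lt_a.
  have := choice_size_monotone (HC _) inB_firm_bound vle_firm_bound.
  by rewrite C_Xa choice_firm_bound vnorm_vadd_unitv vnorm_restr_eq ltnn.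
have ca' : (c == a) = false by apply/eqP.
have := congr1 (fun z : vec => z c) Rc; rewrite /= !ffunE /= eqxx ca' addn0 addn1.
case: eqP => [fc R_c|_ //].
have lt_yx_c : y c < x c.
  rewrite ltnNge; apply/negP => le_xy_c.
  have := choice_substitutable (HC _) c inB_firm_bound vle_firm_bound.
  by rewrite choice_firm_bound !ffunE /= fc eqxx ca' addn0; lia.
exists c; split => //; split; first lia.
rewrite /Defs.Uplus fc.
exact: (rejected_not_interesting (HC _) (stable_acceptable _ Hx) (Uplus_inB U_a) ca Rc).
Qed.

End FirmStep.

Definition decreasing c := Uminus x c /\ y c < x c.

Definition rotation_step c a c' :=
  [/\ essentialW ew ef b C x c a,
      y a <= x a -> interesting (inl (ew a)) a (restr (inl (ew a)) y),
      legalF ew ef b C x a c' & decreasing c'].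

Lemma exists_decreasing : exists c, decreasing c.
Proof.
have /existsP [a lt_a] : [exists a, x a < y a].
  apply: contraT; rewrite negb_exists => /forallP ge_xy.
  case: Hxy => x_ne_y _; exfalso; apply: x_ne_y; apply/ffunP => e.
  have := congr1 (fun z : vec => z e) (firm_choice_vmax (ef e)).
  have -> : vmax (restr (inr (ef e)) y) (restr (inr (ef e)) x) = restr (inr (ef e)) x.
    apply/ffunP => e'; rewrite !ffunE; case: ifP => // _.
    by apply/maxn_idPr; rewrite leqNgt ge_xy.
  by rewrite stable_choice //= !ffunE /= eqxx.
have [c [_ Um_c lt_c]] := firm_step (Uplus_of_lt lt_a) (or_introl lt_a).
by exists c.
Qed.

Lemma exists_rotation_step c : decreasing c -> exists a c', rotation_step c a c'.
Proof.
case=> Um_c lt_c; have [a [ess_a int_a]] := worker_step Um_c lt_c.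
have [[_ U_a _ _] _] := ess_a.
have gain_a : x a < y a \/ interesting (inl (ew a)) a (restr (inl (ew a)) y).
  by case: (ltnP (x a) (y a)) => [|/int_a]; [left | right].
have [c' [legal_c' Um_c' lt_c']] := firm_step U_a gain_a.
by exists a, c'.
Qed.

Lemma exists_rotation_step_fun : exists next : E -> E * E,
  forall c, decreasing c -> rotation_step c (next c).1 (next c).2.
Proof.
have step_ex c : exists p : E * E, decreasing c -> rotation_step c p.1 p.2.
  case: (pselect (decreasing c)) => [/exists_rotation_step [a [c' step]]|not_dec].
    by exists (a, c').
  by exists (c, c) => /not_dec.
exact: fin_all_exists step_ex.
Qed.

Section ApplyRotation.
Variable s : seq (E * E).
Hypothesis uniq_s : uniq (map fst s ++ map snd s).
Hypothesis s_pairs : forall a c, (a, c) \in s ->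
  [/\ legalF ew ef b C x a c, Uminus x c &
      y a <= x a -> interesting (inl (ew a)) a (restr (inl (ew a)) y)].
Local Notation As := (map fst s).
Local Notation Cs := (map snd s).
Local Notation x' := (apply_rotation s x).

Lemma As_Uplus e : e \in As -> Uplus x e.
Proof. by case/mapP => -[a c] /s_pairs [[U_a _ _ _] _ _] ->. Qed.

Lemma As_interesting e : e \in As -> y e <= x e ->
  interesting (inl (ew e)) e (restr (inl (ew e)) y).
Proof. by case/mapP => -[a c] /s_pairs [_ _ int_a] ->. Qed.

Lemma Cs_Uminus e : e \in Cs -> Uminus x e.
Proof. by case/mapP => -[a c] /s_pairs [_ Um_c _] ->. Qed.

Lemma Cs_legal e : e \in Cs -> exists2 a, a \in As & legalF ew ef b C x a e.
Proof.
case/mapP => -[a c] ac_s ->; exists a; first exact: (map_f fst ac_s).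
by case: (s_pairs ac_s).
Qed.

Lemma apply_rotationE e : x' e + (e \in Cs) = x e + (e \in As).
Proof.
rewrite ffunE; have [A_e|A_e] := boolP (e \in As).
  have C_e : e \notin Cs by apply/negP => /Cs_Uminus [_]; apply; apply: As_Uplus.
  by rewrite (negbTE C_e) /= addn0.
have [C_e|//] := boolP (e \in Cs).
by have [x_pos _] := Cs_Uminus C_e; rewrite /=; lia.
Qed.

Lemma vnorm_restr_apply_rotation f :
  vnorm (restr (inr f) x') = vnorm (restr (inr f) x).
Proof.
have [uniq_As uniq_Cs] : uniq As /\ uniq Cs.
  by move: uniq_s; rewrite cat_uniq => /and3P [].
have count_eq : count (inc (inr f)) As = count (inc (inr f)) Cs.
  rewrite !count_map; apply: eq_in_count => -[a c] /s_pairs [[_ fc _ _] _ _].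
  by rewrite /preim /= fc.
have : vnorm (restr (inr f) x') + count (inc (inr f)) Cs =
       vnorm (restr (inr f) x) + count (inc (inr f)) As.
  rewrite -(sum_mem_count _ uniq_Cs) -(sum_mem_count _ uniq_As) /vnorm -!big_split.
  apply: eq_bigr => e _; rewrite !restrE /=.
  by case: (ef e == f); rewrite ?andbT ?andbF ?apply_rotationE.
by rewrite count_eq => /addIn.
Qed.

Lemma firm_acceptable_apply_rotation f : acceptable (inr f) (restr (inr f) x').
Proof.
pose Q : vec := [ffun e => if inc (inr f) e then x e + (e \in As) else 0].
have BQ : inB (inr f) Q.
  move=> e; rewrite ffunE; case: ifP => // _; split => //.
  have [/As_Uplus/Uplus_lt_b|_] := boolP (e \in As); first by rewrite addn1.
  by rewrite addn0 (stable_le_b e Hx).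
have x'_Q : vle (restr (inr f) x') Q.
  by move=> e; rewrite restrE [Q e]ffunE; case: ifP => // _; rewrite -apply_rotationE leq_addr.
have x_Q : vle (restr (inr f) x) Q.
  by move=> e; rewrite restrE ffunE; case: ifP => // _; rewrite leq_addr.
have CQ_x' : vle (C (inr f) Q) (restr (inr f) x').
  move=> e; have := choice_vle (HC _) BQ e; rewrite restrE ffunE.
  case: ifP => [/eqP fe|_ //]; have := apply_rotationE e.
  have [C_e|C_e] := boolP (e \in Cs); last by rewrite addn0 => ->.
  have [a A_a [_ fa ea R_e]] := Cs_legal C_e.
  have le_Q : vle (vadd (restr (inr f) x) (unitv a)) Q.
    move=> e'; rewrite !ffunE /=; case: (e' =P a) => [->|_]; first by rewrite -fa fe eqxx A_a.
    by rewrite addn0; case: ifP => // _; rewrite leq_addr.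
  have := choice_substitutable (HC _) e BQ le_Q.
  move/ffunP/(_ e): R_e; rewrite -fa fe !ffunE /= (introF eqP ea) fe !eqxx /=.
  have A_e : e \notin As by apply/negP => /As_Uplus; case: (Cs_Uminus C_e).
  by rewrite (negbTE A_e) C_e /=; lia.
have norm_x' : vnorm (restr (inr f) x') <= vnorm (C (inr f) Q).
  rewrite vnorm_restr_apply_rotation -{1}(stable_choice (inr f) Hx).
  exact: (choice_size_monotone (HC _) BQ x_Q).
have CQ : C (inr f) Q = restr (inr f) x' := vle_vnorm_eq CQ_x' norm_x'.
split; first by rewrite -CQ; apply: (choice_inB (HC _) BQ).
by rewrite (choice_consistent (HC _) BQ x'_Q) CQ.
Qed.

Lemma firm_choice_apply_rotation f :
  C (inr f) (vmax (restr (inr f) y) (restr (inr f) x')) = restr (inr f) y.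
Proof.
set Yf := restr (inr f) y; set Xf := restr (inr f) x; set X'f := restr (inr f) x'.
set H := vmax (vmax Yf Xf) X'f.
have [BX' _] := firm_acceptable_apply_rotation f.
have BH : inB (inr f) H := inB_vmax (inB_vmax (stable_inB _ Hy) (stable_inB _ Hx)) BX'.
have CH_le : vle (C (inr f) H) (vmax Yf Xf).
  move=> e; have [le_e|] := leqP (X'f e) (vmax Yf Xf e).
    by have := choice_vle (HC _) BH e; rewrite [H e]ffunE; lia.
  rewrite [vmax _ _ e]ffunE !restrE; case: ifP => [/eqP fe lt_e|_]; last by rewrite ltnn.
  have rot_e := apply_rotationE e.
  have A_e : e \in As by apply: contraLR lt_e => /negbTE A_e; move: rot_e; rewrite A_e; lia.
  have int_e := As_interesting A_e (ltac:(move: rot_e; rewrite A_e; lia)).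
  have le_H : vle (vadd Yf (unitv e)) H.
    move=> e'; rewrite [vadd _ _ e']ffunE [unitv e e']ffunE [H e']ffunE [vmax Yf Xf e']ffunE.
    case: (e' =P e) => [->|_] /=; last by rewrite addn0; lia.
    by move: lt_e; rewrite !restrE /= fe eqxx; lia.
  have not_int : ~ interesting (inr f) e Yf by rewrite /Yf -fe; exact: stable_no_block Hy int_e.
  have := choice_le_of_not_interesting (HC _) BH le_H not_int.
  by rewrite /Yf restrE /= fe eqxx; lia.
have CH : C (inr f) H = Yf.
  rewrite -[RHS](firm_choice_vmax f); apply/esym/(choice_consistent (HC _) BH) => // e.
  by rewrite [H e]ffunE leq_maxl.
rewrite -[RHS]CH; apply: (choice_consistent (HC _) BH) => e.
  by rewrite !ffunE; lia.
by rewrite CH [vmax _ _ e]ffunE leq_maxl.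
Qed.

Lemma apply_rotation_preceqF : preceqF ew ef b C x' y.
Proof.
have [->|ne] := eqVneq x' y; [by left | right; split; first exact/eqP].
move=> f; have [->|ne_f] := eqVneq (restr (inr f) x') (restr (inr f) y); [by left | right].
split; [exact: stable_acceptable | exact: firm_acceptable_apply_rotation | exact/eqP |].
exact: firm_choice_apply_rotation.
Qed.

End ApplyRotation.

End StablePair.
End StableMatchings.

Section Rotations.
Variables (W F E : finType) (ew : E -> W) (ef : E -> F) (b : E -> nat).
Variable C : W + F -> {ffun E -> nat} -> {ffun E -> nat}.
Variable x : {ffun E -> nat}.
Local Notation Darc := (Darc ew ef b C x).
Local Notation legalF := (legalF ew ef b C x).
Local Notation essentialW := (essentialW ew ef b C x).
Local Notation Uminus := (Uminus ew ef b C x).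

Lemma legalF_inj a c1 c2 : legalF a c1 -> legalF a c2 -> c1 = c2.
Proof.
case=> _ _ _ R1 [_ _ _ R2]; move/ffunP/(_ c1): (etrans R1 (esym R2)).
by rewrite !ffunE eqxx; case: (c1 =P c2) => //= _; lia.
Qed.

Lemma remaining_of_entering (P : bool * E -> Prop) :
  (forall u, P u -> exists2 u', P u' & Darc u' u) ->
  forall u, P u -> remaining ew ef b C x u.
Proof.
move=> entering u Pu n; elim: n u Pu => [|n IHn] u Pu /=; have [u' Pu' arc] := entering u Pu.
  by case: arc.
by split; [exact: IHn | exists u'; split; [exact: IHn |]].
Qed.

Section Cycle.
Variables (A N : E -> E) (cs : seq E).
Hypotheses (uniq_cs : uniq cs) (rot_cs : rot 1 cs = map N cs).
Hypothesis cs_step : forall c, c \in cs ->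
  [/\ Uminus c, essentialW c (A c) & legalF (A c) (N c)].

Lemma cycle_N c : c \in cs -> N c \in cs.
Proof. by move=> c_cs; rewrite -(mem_rot 1) rot_cs map_f. Qed.

Lemma cycle_Uplus c : c \in cs -> Uplus ew ef b C x (A c).
Proof. by case/cs_step => _ _ []. Qed.

Lemma Darc_Uplus c : c \in cs -> Darc (true, A c) (false, A c).
Proof. by move/cycle_Uplus => U_a; split; [left | left | apply: Or41]. Qed.

Lemma Darc_legalF c : c \in cs -> Darc (false, A c) (false, N c).
Proof.
move=> c_cs; have [_ _ legal] := cs_step c_cs; have [Um_N _ _] := cs_step (cycle_N c_cs).
by split; [left; exact: cycle_Uplus | right | apply: Or43].
Qed.

Lemma Darc_Uminus c : c \in cs -> Darc (false, c) (true, c).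
Proof. by case/cs_step => Um_c _ _; split; [right | right | apply: Or42]. Qed.

Lemma Darc_essentialW c : c \in cs -> Darc (true, c) (true, A c).
Proof.
move=> c_cs; have [Um_c ess _] := cs_step c_cs.
by split; [right | left; exact: cycle_Uplus | apply: Or44].
Qed.

Definition cycle_vertex (u : bool * E) :=
  exists2 c, c \in cs & u \in [:: (true, c); (false, c); (true, A c); (false, A c)].

Lemma cycle_vertexP c : c \in cs ->
  [/\ cycle_vertex (true, c), cycle_vertex (false, c),
      cycle_vertex (true, A c) & cycle_vertex (false, A c)].
Proof. by move=> c_cs; split; exists c; rewrite // !inE eqxx ?orbT. Qed.

Lemma cycle_vertex_remaining u : cycle_vertex u -> remaining ew ef b C x u.
Proof.
apply: remaining_of_entering => {}u [c c_cs]; rewrite !inE => /or4P [] /eqP ->.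
- by exists (false, c); [case: (cycle_vertexP c_cs) | exact: Darc_Uminus].
- have [c' c'_cs ->] : exists2 c', c' \in cs & c = N c'.
    by move: c_cs; rewrite -(mem_rot 1) rot_cs => /mapP.
  by exists (false, A c'); [case: (cycle_vertexP c'_cs) | exact: Darc_legalF].
- by exists (true, c); [case: (cycle_vertexP c_cs) | exact: Darc_essentialW].
- by exists (true, A c); [case: (cycle_vertexP c_cs) | exact: Darc_Uplus].
Qed.

Lemma uniq_cycle_pairs : uniq (map A cs ++ map N cs).
Proof.
have uniq_N : uniq (map N cs) by rewrite -rot_cs rot_uniq.
have uniq_A : uniq (map A cs).
  rewrite map_inj_in_uniq // => c1 c2 c1_cs c2_cs eq_A.
  apply: (uniq_map_inj_in uniq_N) => //.
  have [_ _ legal1] := cs_step c1_cs; have [_ _ legal2] := cs_step c2_cs.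
  by rewrite eq_A in legal1; exact: legalF_inj legal1 legal2.
rewrite cat_uniq uniq_A uniq_N andbT /=.
apply/hasPn => _ /mapP [c c_cs ->]; apply/negP => /mapP [c' c'_cs eq_A].
have [[_ not_U] _ _] := cs_step (cycle_N c_cs).
by apply: not_U; rewrite eq_A; exact: cycle_Uplus.
Qed.

Lemma rotation_of_cycle : 0 < size cs -> rotation ew ef b C x [seq (A c, N c) | c <- cs].
Proof.
move=> size_cs; split; first by rewrite size_map.
  by rewrite -!map_comp; exact: uniq_cycle_pairs.
move=> a c a' c'; rewrite -map_rot rot_cs -map_comp zip_map.
case/mapP => c1 c1_cs [-> -> -> _]; have c2_cs := cycle_N c1_cs.
have [V1 _ V3 V4] := cycle_vertexP c1_cs; have [W1 W2 W3 _] := cycle_vertexP c2_cs.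
have Rarc_of u u' : cycle_vertex u -> cycle_vertex u' -> Darc u u' -> Rarc ew ef b C x u u'.
  by move=> Vu Vu' arc; split => //; exact: cycle_vertex_remaining.
split; apply: Rarc_of => //.
- exact: Darc_Uplus.
- exact: Darc_legalF.
- exact: Darc_Uminus.
- exact: Darc_essentialW.
Qed.

End Cycle.

End Rotations.

Theorem proposition3p5 (W F E : finType) (ew : E -> W) (ef : E -> F)
  (b : E -> nat) (C : W + F -> {ffun E -> nat} -> {ffun E -> nat})
  (Hsimple : injective (fun e => (ew e, ef e)))
  (HC : forall v, choice_function ew ef b C v)
  (x y : {ffun E -> nat})
  (Hx : stable ew ef b C x) (Hy : stable ew ef b C y)
  (Hxy : precF ew ef b C x y) :
  exists s : seq (E * E),
    rotation ew ef b C x s /\ preceqF ew ef b C (apply_rotation s x) y.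
Proof.
have [next next_step] := exists_rotation_step_fun HC Hx Hy Hxy.
have [c0 dec_c0] := exists_decreasing HC Hx Hy Hxy.
have dec_next c : decreasing ew ef b C x y c -> decreasing ew ef b C x y (next c).2.
  by case/next_step.
have [cs [size_cs uniq_cs rot_cs dec_cs]] := exists_fcycle dec_c0 dec_next.
have rot_s : rotation ew ef b C x [seq ((next c).1, (next c).2) | c <- cs].
  apply: (rotation_of_cycle (A := fun c => (next c).1) uniq_cs rot_cs _ size_cs).
  by move=> c /dec_cs /next_step [ess _ legal _]; split => //; case: ess => -[].
exists [seq ((next c).1, (next c).2) | c <- cs]; split => //.
apply: (apply_rotation_preceqF HC Hx Hy Hxy); first by case: rot_s.
by move=> a c /mapP [c1 /dec_cs /next_step [_ int_a legal [Um_c _]] [-> ->]].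
Qed.
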